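(* Let $\Phi$ be an irreducible reduced root system with basis $\Delta$, Weyl group $W$ with length function $l$, highest root $\tilde\alpha$. For every positive long root $\alpha$, $x_{-\alpha}=s_\alpha x_\alpha$ and $l(x_{-\alpha})=l(s_\alpha x_\alpha)=l(s_\alpha)+l(x_\alpha)$.
   Context: Long roots are those of maximal length for a $W$-invariant scalar product $(\cdot|\cdot)$. $\tilde I=\{\alpha\in\Delta:(\tilde\alpha|\alpha)=0\}$, $\Phi_{\tilde I}^+$ the positive roots in the span of $\tilde I$, $X_{\tilde I}=\{w\in W:w(\Phi^+_{\tilde I})\subset\Phi^+\}$; for a long root $\beta$, $x_\beta$ is the unique element of $X_{\tilde I}$ with $x_\beta(\tilde\alpha)=\beta$. *)

From Stdlib Require Import ClassicalDescription.
From HB Require Import structures.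
From mathcomp Require Import all_boot all_order all_algebra.
Set Implicit Arguments. Unset Strict Implicit. Unset Printing Implicit Defensive.
Import Order.TTheory GRing.Theory Num.Theory.
Local Open Scope ring_scope.

Section RootSystems.
Variables (R : realFieldType) (n : nat).
Notation vec := 'cV[R]_n.

Definition dotv (u v : vec) : R := \sum_(i < n) u i ord0 * v i ord0.

Definition refl_mx (a : vec) : 'M[R]_n :=
  1%:M - (2 / dotv a a) *: (a *m a^T).

(* Phi is a (finite, crystallographic) reduced root system spanning the space *)
Definition root_system (Phi : seq vec) : Prop :=
  [/\ uniq Phi /\ 0 \notin Phi,
      (forall v : vec, exists c : vec -> R, v = \sum_(b <- Phi) c b *: b),
      (forall a b, a \in Phi -> b \in Phi -> refl_mx a *m b \in Phi),
      (forall a b, a \in Phi -> b \in Phi ->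
         exists z : int, 2 * dotv b a / dotv a a = z%:~R) &
      (forall a (c : R), a \in Phi -> c *: a \in Phi -> c = 1 \/ c = -1)].

Definition irreducible_rs (Phi : seq vec) : Prop :=
  forall P : pred vec,
    (exists2 a, a \in Phi & P a) -> (exists2 b, b \in Phi & ~~ P b) ->
    exists a b, [/\ a \in Phi, b \in Phi, P a, ~~ P b & dotv a b != 0].

Definition nonneg_comb (Delta : seq vec) (v : vec) : Prop :=
  exists c : 'I_(size Delta) -> nat, v = \sum_(i < size Delta) (c i)%:R *: Delta`_i.

Definition is_basis (Phi Delta : seq vec) : Prop :=
  [/\ uniq Delta, {subset Delta <= Phi},
      (forall c : 'I_(size Delta) -> R,
          \sum_(i < size Delta) c i *: Delta`_i = 0 -> forall i, c i = 0) &
      (forall b, b \in Phi -> nonneg_comb Delta b \/ nonneg_comb Delta (- b))].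

Definition pos_root (Phi Delta : seq vec) (b : vec) : Prop :=
  b \in Phi /\ nonneg_comb Delta b.

Definition highest_root (Phi Delta : seq vec) (ah : vec) : Prop :=
  ah \in Phi /\ forall b, b \in Phi -> nonneg_comb Delta (ah - b).

Definition long_root (Phi : seq vec) (b : vec) : Prop :=
  b \in Phi /\ forall c, c \in Phi -> dotv c c <= dotv b b.

Definition word_mx (s : seq vec) : 'M[R]_n :=
  foldr (fun a M => refl_mx a *m M) 1%:M s.

Definition inW (Phi : seq vec) (w : 'M[R]_n) : Prop :=
  exists s : seq vec, all (mem Phi) s /\ w = word_mx s.

Definition has_word_of_size (Delta : seq vec) (w : 'M[R]_n) (k : nat) : bool :=
  [exists t : k.-tuple 'I_(size Delta),
     word_mx (map (fun i : 'I_(size Delta) => Delta`_i) t) == w].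

Definition lengthW (Delta : seq vec) (w : 'M[R]_n) : nat :=
  match excluded_middle_informative (exists k, has_word_of_size Delta w k) with
  | left h => ex_minn h
  | right _ => 0%N
  end.

Definition Itilde (Delta : seq vec) (ah : vec) : pred vec :=
  fun a => (a \in Delta) && (dotv ah a == 0).

Definition pos_roots_Itilde (Phi Delta : seq vec) (ah : vec) (b : vec) : Prop :=
  pos_root Phi Delta b /\
  exists c : vec -> R, b = \sum_(a <- Delta | Itilde Delta ah a) c a *: a.

Definition in_XI (Phi Delta : seq vec) (ah : vec) (w : 'M[R]_n) : Prop :=
  inW Phi w /\
  forall g, pos_roots_Itilde Phi Delta ah g -> pos_root Phi Delta (w *m g).

Definition is_x (Phi Delta : seq vec) (ah beta : vec) (w : 'M[R]_n) : Prop :=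
  in_XI Phi Delta ah w /\ w *m ah = beta.

End RootSystems.

(* For g in Phi^+_I~ we have (x_a g | a) = (g | x_a^-1 a) = (g | ah) = 0, so s_a
   fixes x_a g; hence s_a x_a lies in X_I~ and maps ah to -a. Elements of X_I~
   are determined by their value on ah: by Chevalley's lemma a reduced word for
   an element fixing the dominant root ah only uses simple reflections of I~,
   and a nonempty such word would make some root of Phi^+_I~ change sign.
   For the lengths, l(w) is the number of positive roots made negative by w
   (exchange condition). A positive root b with x_a b < 0 stays negative under
   s_a, since (x_a b | a) = (b | ah) <= 0; a positive root c with s_a c < 0 has
   (c | a) > 0, so x_a^-1 c is positive as (x_a^-1 c | ah) = (c | a) > 0.
   Thus the inversions of s_a x_a are those of x_a together with the
   x_a-preimages of those of s_a. *)
From Stdlib Require Import ClassicalDescription.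
From mathcomp Require Import all_boot all_order all_algebra.
From mathcomp Require Import ring lra zify.
Set Implicit Arguments. Unset Strict Implicit. Unset Printing Implicit Defensive.
Import Order.TTheory GRing.Theory Num.Theory.
Local Open Scope ring_scope.

Lemma count_split (T : Type) (p q : pred T) (s : seq T) :
  count p s = (count (fun x => p x && q x) s + count (fun x => p x && ~~ q x) s)%N.
Proof. by elim: s => [|x s IH] //=; rewrite IH; case: (p x); case: (q x) => /=; lia. Qed.

Lemma count_addE (T : eqType) (s : seq T) (f g p q : pred T) :
  {in s, forall x, (g x + p x = f x + q x)%N} ->
  (count g s + count p s = count f s + count q s)%N.
Proof.
elim: s => [|x s IH] //= H.
have := H x (mem_head _ _); have := IH (fun y ys => H y (mem_behead (s := x :: s) ys)).
lia.
Qed.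

Lemma count_pred1_and (T : eqType) (s : seq T) x (X : bool) :
  x \in s -> uniq s -> count (fun y => (y == x) && X) s = X.
Proof.
move=> xs us; case: X.
  by rewrite (eq_count (a2 := pred1 x)) ?count_uniq_mem ?xs // => y; rewrite andbT.
by rewrite (eq_count (a2 := pred0)) ?count_pred0 // => y; rewrite andbF.
Qed.

Section Reflections.
Variables (R : realFieldType) (n : nat).
Notation vec := 'cV[R]_n.
Implicit Types (u v w a b : vec) (s t : seq vec).

Lemma dotvC u v : dotv u v = dotv v u.
Proof. by rewrite /dotv; apply: eq_bigr => i _; rewrite mulrC. Qed.

Lemma dotvDl u v w : dotv (u + v) w = dotv u w + dotv v w.
Proof. by rewrite /dotv -big_split; apply: eq_bigr => i _; rewrite mxE mulrDl. Qed.

Lemma dotvZl k u v : dotv (k *: u) v = k * dotv u v.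
Proof. by rewrite /dotv mulr_sumr; apply: eq_bigr => i _; rewrite mxE mulrA. Qed.

Lemma dotvNl u v : dotv (- u) v = - dotv u v.
Proof. by rewrite -scaleN1r dotvZl mulN1r. Qed.

Lemma dotvBl u v w : dotv (u - v) w = dotv u w - dotv v w.
Proof. by rewrite dotvDl dotvNl. Qed.

Lemma dotv0l v : dotv 0 v = 0.
Proof. by rewrite -(scale0r 0) dotvZl mul0r. Qed.

Lemma dotvZr k u v : dotv v (k *: u) = k * dotv v u.
Proof. by rewrite dotvC dotvZl dotvC. Qed.

Lemma dotvNr u v : dotv v (- u) = - dotv v u.
Proof. by rewrite dotvC dotvNl dotvC. Qed.

Lemma dotvBr u v w : dotv w (u - v) = dotv w u - dotv w v.
Proof. by rewrite dotvC dotvBl !(dotvC w). Qed.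

Lemma dotv_suml (I : Type) (s : seq I) (P : pred I) (F : I -> vec) u :
  dotv (\sum_(i <- s | P i) F i) u = \sum_(i <- s | P i) dotv (F i) u.
Proof.
by elim/big_rec2: _ => [|i y1 y2 _ <-]; rewrite ?dotv0l ?dotvDl.
Qed.

Lemma dotv_eq0 u : (dotv u u == 0) = (u == 0).
Proof.
apply/idP/idP => [/eqP H|/eqP->]; last by rewrite dotv0l.
apply/eqP/matrixP => i j; rewrite !ord1 mxE.
have H2 : \sum_(k < n) (u k ord0) ^+ 2 = 0.
  by rewrite -[RHS]H /dotv; apply: eq_bigr => k _; rewrite expr2.
have := psumr_eq0P (fun k _ => sqr_ge0 (u k ord0)) H2.
by move=> /(_ i isT) /eqP; rewrite sqrf_eq0 => /eqP.
Qed.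

Lemma dotv_gt0 u : u != 0 -> 0 < dotv u u.
Proof.
move=> nz; rewrite lt_def dotv_eq0 nz /=.
by apply: sumr_ge0 => i _; rewrite -expr2 sqr_ge0.
Qed.

Lemma trmx_mul_dotv u v : u^T *m v = (dotv u v)%:M.
Proof.
apply/matrixP => i j; rewrite !ord1 !mxE eqxx /=.
by apply: eq_bigr => k _; rewrite mxE.
Qed.

Definition refl_coef a v := 2 * dotv a v / dotv a a.

Lemma refl_mxE a v : refl_mx a *m v = v - refl_coef a v *: a.
Proof.
rewrite /refl_mx mulmxBl mul1mx -scalemxAl -mulmxA trmx_mul_dotv mul_mx_scalar.
by rewrite scalerA /refl_coef mulrAC.
Qed.

Lemma refl_mx_orth a v : dotv a v = 0 -> refl_mx a *m v = v.
Proof. by move=> av; rewrite refl_mxE /refl_coef av mulr0 mul0r scale0r subr0. Qed.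

Lemma mx_ext_mulmx (A B : 'M[R]_n) : (forall v : vec, A *m v = B *m v) -> A = B.
Proof.
move=> H; apply/matrixP => i j.
have /matrixP/(_ i ord0) := H (delta_mx j 0).
by rewrite -!colE !mxE.
Qed.

Lemma refl_mxK a v : a != 0 -> refl_mx a *m (refl_mx a *m v) = v.
Proof.
move=> nz; have ha := dotv_gt0 nz.
rewrite !refl_mxE; set k := refl_coef a v.
have -> : refl_coef a (v - k *: a) = - k.
  by rewrite /refl_coef dotvBr dotvZr /k /refl_coef; field; rewrite lt0r_neq0.
by rewrite scaleNr opprK subrK.
Qed.

Lemma refl_mx_sq a : a != 0 -> refl_mx a *m refl_mx a = 1%:M.
Proof. by move=> nz; apply: mx_ext_mulmx => v; rewrite -mulmxA refl_mxK // mul1mx. Qed.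

Lemma refl_mx_self a : a != 0 -> refl_mx a *m a = - a.
Proof.
move=> nz; rewrite refl_mxE /refl_coef mulfK; last by rewrite dotv_eq0.
by rewrite scaler_nat mulr2n opprD addNKr.
Qed.

Lemma refl_mxN a : refl_mx (- a) = refl_mx a.
Proof.
apply: mx_ext_mulmx => v; rewrite !refl_mxE /refl_coef dotvNl dotvNr dotvNl opprK.
by rewrite scalerN -scaleNr mulrN mulNr opprK.
Qed.

Definition isometry_mx (M : 'M[R]_n) := forall u v, dotv (M *m u) (M *m v) = dotv u v.

Lemma isometry_refl_mx a : a != 0 -> isometry_mx (refl_mx a).
Proof.
move=> nz u v; have ha' := lt0r_neq0 (dotv_gt0 nz).
by rewrite !refl_mxE !(dotvBl, dotvBr, dotvZl, dotvZr) /refl_coef (dotvC u a); field.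
Qed.

Lemma isometry_mulmx (M N : 'M[R]_n) : isometry_mx M -> isometry_mx N -> isometry_mx (M *m N).
Proof. by move=> iM iN u v; rewrite -!mulmxA iM iN. Qed.

Lemma isometry_inj (M : 'M[R]_n) u v : isometry_mx M -> M *m u = M *m v -> u = v.
Proof.
move=> iM H; apply/eqP; rewrite -subr_eq0 -dotv_eq0 -iM mulmxBr H subrr.
by rewrite dotv0l.
Qed.

Lemma refl_mx_conj (M : 'M[R]_n) a : isometry_mx M ->
  refl_mx (M *m a) *m M = M *m refl_mx a.
Proof.
by move=> iM; apply: mx_ext_mulmx => v; rewrite -!mulmxA !refl_mxE mulmxBr -scalemxAr /refl_coef !iM.
Qed.

Lemma word_mx_rcons s a : word_mx (rcons s a) = word_mx s *m refl_mx a.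
Proof. by elim: s => [|b s IH] /=; rewrite ?mulmx1 ?mul1mx // IH mulmxA. Qed.

Lemma word_mx_cat s t : word_mx (s ++ t) = word_mx s *m word_mx t.
Proof. by elim: s => [|b s IH] /=; rewrite ?mul1mx // IH mulmxA. Qed.

Lemma word_mx_isometry s : all (fun a => a != 0) s -> isometry_mx (word_mx s).
Proof.
elim: s => [|b s IH] /=; first by move=> _ u v; rewrite !mul1mx.
by case/andP => nb /IH; apply: isometry_mulmx; apply: isometry_refl_mx.
Qed.

Lemma word_mx_revK s : all (fun a => a != 0) s -> word_mx (rev s) *m word_mx s = 1%:M.
Proof.
elim: s => [|b s IH] /=; first by rewrite mulmx1.
case/andP => nb /IH H; rewrite rev_cons word_mx_rcons -mulmxA (mulmxA (refl_mx b)).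
by rewrite refl_mx_sq // mul1mx.
Qed.

Lemma word_mx_Krev s : all (fun a => a != 0) s -> word_mx s *m word_mx (rev s) = 1%:M.
Proof. by move=> H; rewrite -{1}(revK s) word_mx_revK // all_rev. Qed.

End Reflections.

Section RootSystem.
Variables (R : realFieldType) (n : nat) (Phi Delta : seq 'cV[R]_n).
Notation vec := 'cV[R]_n.
Notation m := (size Delta).
Implicit Types (u v w a b : vec) (s t : seq vec).
Hypothesis rs : root_system Phi.
Hypothesis bs : is_basis Phi Delta.

Lemma root_neq0 a : a \in Phi -> a != 0.
Proof. by case: rs => [[_ h0] _ _ _ _] aP; apply: contraNneq h0 => <-. Qed.

Lemma roots_neq0 s : all (mem Phi) s -> all (fun a => a != 0) s.
Proof. by move=> /allP H; apply/allP => a /H; apply: root_neq0. Qed.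

Lemma refl_root a b : a \in Phi -> b \in Phi -> refl_mx a *m b \in Phi.
Proof. by case: rs => _ _ h _ _; apply: h. Qed.

Lemma oppr_root a : a \in Phi -> - a \in Phi.
Proof. by move=> aP; rewrite -refl_mx_self ?root_neq0 // refl_root. Qed.

Lemma simple_root : {subset Delta <= Phi}.
Proof. by case: bs. Qed.

Lemma inW_word s : all (mem Phi) s -> inW Phi (word_mx s).
Proof. by move=> sP; exists s. Qed.

Lemma inW_isometry M : inW Phi M -> isometry_mx M.
Proof. by case=> s [/roots_neq0 sP ->]; exact: word_mx_isometry. Qed.

Lemma inW_root M b : inW Phi M -> b \in Phi -> M *m b \in Phi.
Proof.
case=> s [+ ->]; elim: s => [|a s IH] /=; first by rewrite mul1mx.
by case/andP => aP sP bP; rewrite -mulmxA refl_root // IH.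
Qed.

Lemma perm_roots_inW M : inW Phi M -> perm_eq Phi (map (mulmx M) Phi).
Proof.
move=> MW; have [[uP _] _ _ _ _] := rs.
have um : uniq (map (mulmx M) Phi).
  by rewrite map_inj_in_uniq // => x y _ _; apply: isometry_inj (inW_isometry MW).
have sub : {subset map (mulmx M) Phi <= Phi} by move=> x /mapP [y yP ->]; apply: inW_root.
have [_ E] := uniq_min_size um sub (eq_leq (esym (size_map _ _))).
by apply: uniq_perm => // x; rewrite E.
Qed.

Lemma count_roots_inW M (P : pred vec) : inW Phi M ->
  count P Phi = count (fun b => P (M *m b)) Phi.
Proof. by move=> MW; rewrite (permP (perm_roots_inW MW)) count_map. Qed.

Lemma mem_nth_simple (j : 'I_m) : Delta`_j \in Delta.
Proof. exact: mem_nth. Qed.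

Definition comb (c : 'I_m -> R) : vec := \sum_(i < m) c i *: Delta`_i.

Lemma combB c d : comb c - comb d = comb (fun i => c i - d i).
Proof. by rewrite /comb -sumrB; apply: eq_bigr => i _; rewrite scalerBl. Qed.

Lemma combN c : - comb c = comb (fun i => - c i).
Proof. by rewrite /comb -sumrN; apply: eq_bigr => i _; rewrite scaleNr. Qed.

Lemma combZ k c : k *: comb c = comb (fun i => k * c i).
Proof. by rewrite /comb scaler_sumr; apply: eq_bigr => i _; rewrite scalerA. Qed.

Lemma comb_inj c d : comb c = comb d -> forall i, c i = d i.
Proof.
move=> H i; apply/eqP; rewrite -subr_eq0; apply/eqP.
case: bs => _ _ li _; apply: (li (fun i => c i - d i)).
by rewrite -[LHS]/(comb (fun i => c i - d i)) -combB H subrr.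
Qed.

Lemma comb_delta j : comb (fun i => (i == j)%:R) = Delta`_j.
Proof.
rewrite /comb (bigD1 j) //= eqxx scale1r big1 ?addr0 // => i /negPf ->.
by rewrite scale0r.
Qed.

Lemma comb_nat_eq0 (c : 'I_m -> nat) :
  (forall i, c i = 0%N) -> comb (fun i => (c i)%:R) = 0.
Proof. by move=> c0; rewrite /comb big1 // => i _; rewrite c0 scale0r. Qed.

Definition positive b : bool :=
  if excluded_middle_informative (nonneg_comb Delta b) then true else false.

Lemma positiveP b :
  reflect (exists c : 'I_m -> nat, b = comb (fun i => (c i)%:R)) (positive b).
Proof. by rewrite /positive; case: excluded_middle_informative => h; constructor. Qed.

Lemma positiveN b : b \in Phi -> positive (- b) = ~~ positive b.
Proof.
move=> bP; case: (positiveP b) => [[c Hc]|nb]; case: (positiveP (- b)) => //.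
- move=> [d Hd]; have /comb_inj E : comb (fun i => (c i)%:R) = comb (fun i => - (d i)%:R).
    by rewrite -combN -Hd -Hc opprK.
  have c0 i : c i = 0%N.
    by move/eqP: (E i); rewrite -addr_eq0 -natrD pnatr_eq0 addn_eq0 => /andP [/eqP].
  by move: (root_neq0 bP); rewrite Hc comb_nat_eq0 ?eqxx.
- by case: bs => _ _ _ /(_ b bP) [].
Qed.

Lemma positive_coef b (r : 'I_m -> R) j : b \in Phi -> b = comb r -> 0 < r j -> positive b.
Proof.
move=> bP Hb rj; apply: contraT; rewrite -positiveN // => /positiveP [d Hd].
have /comb_inj/(_ j) E : comb r = comb (fun i => - (d i)%:R).
  by rewrite -combN -Hd Hb opprK.
by move: rj; rewrite E oppr_gt0 ltNge ler0n.
Qed.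

Lemma positive_nat_coef b : b \in Phi -> positive b ->
  exists c : 'I_m -> nat, b = comb (fun i => (c i)%:R) /\ exists j, (0 < c j)%N.
Proof.
move=> bP /positiveP [c Hc]; exists c; split => //.
apply/existsP; apply: contraT; rewrite negb_exists => /forallP H0.
move: (root_neq0 bP); rewrite Hc comb_nat_eq0 ?eqxx // => i.
by apply/eqP; rewrite -leqn0 leqNgt H0.
Qed.

Definition simple_index a (aD : a \in Delta) : 'I_m :=
  Ordinal (etrans (index_mem a Delta) aD).

Lemma simple_indexE a (aD : a \in Delta) : Delta`_(simple_index aD) = a.
Proof. by rewrite /simple_index /= nth_index. Qed.

Lemma simple_positive al : al \in Delta -> positive al.
Proof.
move=> aD; apply/positiveP; exists (fun i => (i == simple_index aD)%N).
rewrite -{1}(simple_indexE aD) -(comb_delta (simple_index aD)) /comb.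
by apply: eq_bigr => i _; case: (i == simple_index aD).
Qed.

(* The positive root b is not a multiple of al (reducedness), so it keeps a
   positive coefficient outside al, which s_al does not change. *)
Lemma simple_refl_positive al b : al \in Delta -> b \in Phi -> positive b -> b != al ->
  positive (refl_mx al *m b).
Proof.
move=> aD bP pb nba; have aP := simple_root aD.
have [c [Hc _]] := positive_nat_coef bP pb.
set j0 := simple_index aD.
have [k /andP [nk ck]] : exists k, (k != j0) && (0 < c k)%N.
  apply/existsP; apply: contraT; rewrite negb_exists => /forallP H0.
  have Hb : b = (c j0)%:R *: al.
    rewrite Hc /comb (bigD1 j0) //= simple_indexE // big1 ?addr0 // => i ni.
    by move: (H0 i); rewrite ni /= -leqNgt leqn0 => /eqP ->; rewrite scale0r.
  case: rs => _ _ _ _ /(_ al (c j0)%:R aP); rewrite -Hb => /(_ bP) [E|E].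
    by move: nba; rewrite Hb E scale1r eqxx.
  by move: (ler0n R (c j0)); rewrite E; lra.
apply: (positive_coef (r := fun i => (c i)%:R - refl_coef al b * (i == j0)%:R) (j := k)).
- exact: refl_root.
- rewrite refl_mxE; set z := refl_coef al b.
  by rewrite -[in z *: al](simple_indexE aD) -(comb_delta j0) combZ {1}Hc combB.
- by rewrite (negPf nk) mulr0 subr0 ltr0n.
Qed.

Lemma refl_negative_dotv_gt0 g a : g \in Phi -> positive g -> a \in Phi -> positive a ->
  ~~ positive (refl_mx a *m g) -> 0 < dotv g a.
Proof.
move=> gP pg aP pa H; rewrite ltNge; apply: contra H => Hle.
have [cg [Hg [j cj]]] := positive_nat_coef gP pg.
have [ca Hca] := positiveP _ pa.
have z0 : refl_coef a g <= 0.
  rewrite /refl_coef dotvC; apply: mulr_le0_ge0; first by rewrite pmulr_rle0 ?ltr0n.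
  by rewrite invr_ge0 ltW // dotv_gt0 ?root_neq0.
apply: (positive_coef (r := fun i => (cg i)%:R - refl_coef a g * (ca i)%:R) (j := j)).
- exact: refl_root.
- rewrite refl_mxE; set z := refl_coef a g.
  by rewrite [in z *: a]Hca {1}Hg combZ combB.
- have : 0 <= - refl_coef a g * (ca j)%:R by rewrite mulr_ge0 ?ler0n // oppr_ge0.
  have : (0 : R) < (cg j)%:R by rewrite ltr0n.
  lra.
Qed.

Definition inv_count (M : 'M[R]_n) : nat :=
  count (fun b => positive b && ~~ positive (M *m b)) Phi.

Lemma inv_count1 : inv_count 1%:M = 0%N.
Proof.
by rewrite /inv_count (eq_count (a2 := pred0)) ?count_pred0 // => b; rewrite mul1mx andbN.
Qed.

(* s_al permutes the positive roots other than al, and swaps al and -al. *)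
Lemma inv_count_mulmx_simple M al : inW Phi M -> al \in Delta ->
  (inv_count (M *m refl_mx al) + ~~ positive (M *m al) =
   inv_count M + positive (M *m al))%N.
Proof.
move=> MW aD; have aP := simple_root aD; have anz := root_neq0 aP.
have naP := oppr_root aP; have [[uP _] _ _ _ _] := rs.
have pa := simple_positive aD.
have ane : al != - al.
  apply: contra anz => /eqP H.
  have : al *+ 2 = 0 by rewrite mulr2n {2}H subrr.
  by rewrite -scaler_nat => /eqP; rewrite scaler_eq0 pnatr_eq0.
have alW : inW Phi (refl_mx al) by exists [:: al]; rewrite /= aP mulmx1.
rewrite /inv_count (count_roots_inW _ alW) -(count_pred1_and (~~ positive (M *m al)) aP uP).
rewrite -(count_pred1_and (positive (M *m al)) naP uP).
apply: count_addE => b bP /=.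
rewrite mulmxA -(mulmxA M) refl_mx_sq // mulmx1.
have [->|nba] := eqVneq b al.
  rewrite refl_mx_self // positiveN // pa (negbTE ane) /=.
  by case: (positive (M *m al)).
have [->|nbna] := eqVneq b (- al).
  rewrite mulmxN refl_mx_self // opprK pa mulmxN !positiveN ?inW_root // pa.
  by case: (positive (M *m al)).
rewrite /= !addn0.
suff -> : positive (refl_mx al *m b) = positive b by [].
case pb: (positive b); first exact: simple_refl_positive.
apply: negbTE; rewrite -positiveN ?refl_root // -mulmxN.
apply: simple_refl_positive => //; first exact: oppr_root.
  by rewrite positiveN // pb.
by apply: contra nbna => /eqP <-; rewrite opprK.
Qed.

Definition simple_word t := all (mem Delta) t.

Lemma simple_word_roots t : simple_word t -> all (mem Phi) t.
Proof. by move=> /allP H; apply/allP => a /H /simple_root. Qed.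

Lemma simple_word_rcons t al : simple_word (rcons t al) = simple_word t && (al \in Delta).
Proof. by rewrite /simple_word all_rcons andbC. Qed.

Lemma exchange t al : simple_word t -> al \in Delta -> ~~ positive (word_mx t *m al) ->
  exists t2, [/\ simple_word t2, (size t2).+1 = size t & word_mx t2 = word_mx t *m refl_mx al].
Proof.
move=> + alD; elim: t => [|a t IH] /=; first by rewrite mul1mx simple_positive.
case/andP => aD tD; rewrite -mulmxA => H.
have tW := inW_word (simple_word_roots tD).
case pt: (positive (word_mx t *m al)).
  have ba : word_mx t *m al = a.
    apply/eqP; apply: contraNT H => nba.
    by apply: simple_refl_positive => //; apply: inW_root (simple_root alD).
  exists t; split => //.
  rewrite /= -mulmxA -(refl_mx_conj al (inW_isometry tW)) ba mulmxA.
  by rewrite refl_mx_sq ?mul1mx // root_neq0 ?simple_root.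
have [t2 [t2D sz w2]] := IH tD (negbT pt).
by exists (a :: t2); rewrite /= aD sz w2 mulmxA.
Qed.

Definition reduced t :=
  forall t2, simple_word t2 -> word_mx t2 = word_mx t -> (size t <= size t2)%N.

Lemma reduced_rcons t al : simple_word (rcons t al) -> reduced (rcons t al) -> reduced t.
Proof.
rewrite simple_word_rcons => /andP [tD aD] red t2 t2D w2.
have := red (rcons t2 al); rewrite simple_word_rcons t2D aD !word_mx_rcons w2 !size_rcons.
by move=> /(_ isT erefl).
Qed.

Lemma reduced_last_positive t al : simple_word (rcons t al) -> reduced (rcons t al) ->
  positive (word_mx t *m al).
Proof.
move=> D red; move: (D); rewrite simple_word_rcons => /andP [tD aD].
apply: contraT => H; have [t2 [t2D sz w2]] := exchange tD aD H.
have := red t2 t2D; rewrite w2 word_mx_rcons size_rcons => /(_ erefl).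
lia.
Qed.

Lemma inv_count_reduced t : simple_word t -> reduced t -> inv_count (word_mx t) = size t.
Proof.
elim/last_ind: t => [|t al IH] tD red; first exact: inv_count1.
move: (tD); rewrite simple_word_rcons => /andP [tD' aD].
have := inv_count_mulmx_simple (inW_word (simple_word_roots tD')) aD.
rewrite reduced_last_positive // IH //; last exact: reduced_rcons red.
by rewrite word_mx_rcons size_rcons /=; lia.
Qed.

Lemma has_word_of_sizeP (w : 'M[R]_n) k : has_word_of_size Delta w k ->
  exists t, [/\ simple_word t, size t = k & word_mx t = w].
Proof.
move=> /existsP [tp /eqP H]; exists (map (fun i : 'I_m => Delta`_i) tp).
split => //; last by rewrite size_map size_tuple.
by apply/allP => x /mapP [i _ ->]; exact: mem_nth.
Qed.

Lemma has_word_of_size_word t : simple_word t -> has_word_of_size Delta (word_mx t) (size t).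
Proof.
case: t => [|a t0] tD; first by apply/existsP; exists [tuple].
have aD : a \in Delta by case/andP: tD.
pose f x := insubd (simple_index aD) (index x Delta) : 'I_m.
have E x : x \in a :: t0 -> Delta`_(f x) = x.
  move=> xt; have xD : x \in Delta by move/allP: tD => /(_ x xt).
  by rewrite /f val_insubd index_mem xD nth_index.
apply/existsP; exists (@Tuple _ _ (map f (a :: t0)) (introT eqP (size_map f _))).
apply/eqP; congr word_mx; rewrite /= E ?mem_head //; congr cons.
rewrite -map_comp -[RHS]map_id; apply/eq_in_map => x xt /=.
by apply: E; rewrite inE xt orbT.
Qed.

Lemma reduced_exists t : simple_word t ->
  exists t', [/\ simple_word t', reduced t' & word_mx t' = word_mx t].
Proof.
move=> tD; have ex : exists k, has_word_of_size Delta (word_mx t) k.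
  by exists (size t); exact: has_word_of_size_word.
case: (ex_minnP ex) => k /has_word_of_sizeP [t' [t'D szt' wt']] kmin.
exists t'; split => // t2 t2D wt2; rewrite szt'; apply: kmin.
by have := has_word_of_size_word t2D; rewrite wt2 wt'.
Qed.

Lemma lengthW_inv_count t : simple_word t -> lengthW Delta (word_mx t) = inv_count (word_mx t).
Proof.
move=> tD; rewrite /lengthW; case: excluded_middle_informative => [h|h]; last first.
  by exfalso; apply: h; exists (size t); exact: has_word_of_size_word.
case: ex_minnP => k /has_word_of_sizeP [t' [t'D szt' wt']] kmin.
rewrite -wt' inv_count_reduced // ?szt' // => t2 t2D wt2; rewrite szt'; apply: kmin.
by have := has_word_of_size_word t2D; rewrite wt2 wt'.
Qed.

(* Otherwise (b | b) = sum_i c_i (Delta_i | b) <= 0. *)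
Lemma positive_simple_dotv_gt0 b (c : 'I_m -> nat) : b \in Phi ->
  b = comb (fun i => (c i)%:R) -> exists j, (0 < c j)%N && (0 < dotv Delta`_j b).
Proof.
move=> bP Hb; apply/existsP; apply: contraT; rewrite negb_exists => /forallP H.
have : dotv b b <= 0.
  rewrite {1}Hb /comb dotv_suml; apply: sumr_le0 => i _; rewrite dotvZl.
  move: (H i); rewrite negb_and -leqNgt -leNgt leqn0 => /orP [/eqP ->|Hi].
    by rewrite mul0r.
  exact: mulr_ge0_le0.
by rewrite leNgt dotv_gt0 ?root_neq0.
Qed.

Lemma refl_simple_height_lt b (c : 'I_m -> nat) : b \in Phi -> b \notin Delta ->
  b = comb (fun i => (c i)%:R) ->
  exists (j : 'I_m) (c' : 'I_m -> nat), refl_mx Delta`_j *m b = comb (fun i => (c' i)%:R) /\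
    (\sum_i c' i < \sum_i c i)%N.
Proof.
move=> bP bD Hb; have [j /andP [cj dj]] := positive_simple_dotv_gt0 bP Hb.
have alP := simple_root (mem_nth_simple j).
set al := Delta`_j in alP *.
have pb' : positive (refl_mx al *m b).
  apply: simple_refl_positive => //; [exact: mem_nth_simple | by apply/positiveP; exists c|].
  by apply: contraNneq bD => ->; exact: mem_nth_simple.
have [c' Hc'] := positiveP _ pb'.
exists j, c'; split => //.
set z := refl_coef al b.
have [k Hk] : exists k : int, z = k%:~R.
  by case: rs => _ _ _ /(_ al b alP bP) [k Hk] _; exists k; rewrite /z /refl_coef dotvC.
have z1 : 1 <= z.
  have : 0 < z by rewrite /z /refl_coef divr_gt0 ?mulr_gt0 ?dotv_gt0 ?root_neq0.
  by rewrite Hk ltr0z ler1z; lia.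
have E : comb (fun i => (c' i)%:R) = comb (fun i => (c i)%:R - z * (i == j)%:R).
  by rewrite -Hc' -combB -combZ comb_delta -Hb refl_mxE.
have Eo i : i != j -> c' i = c i.
  by move=> ij; move: (comb_inj E i); rewrite (negPf ij) mulr0 subr0 => /eqP; rewrite eqr_nat => /eqP.
have cjlt : (c' j < c j)%N.
  by rewrite -(ltr_nat R) (comb_inj E j) eqxx mulr1; lra.
rewrite (bigD1 j) //= [X in (_ < X)%N](bigD1 j) //=.
by rewrite (eq_bigr c (fun i => Eo i)) ltn_add2r.
Qed.

Lemma refl_positive_simple_word b : b \in Phi -> positive b ->
  exists t, simple_word t /\ word_mx t = refl_mx b.
Proof.
move=> bP /positiveP [c Hc].
have [N leN] : exists N, (\sum_i c i <= N)%N by exists (\sum_i c i).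
elim: N b c bP Hc leN => [|N IH] b c bP Hb Hs.
  move: (root_neq0 bP); rewrite Hb comb_nat_eq0 ?eqxx // => i.
  by apply/eqP; rewrite -leqn0 (leq_trans _ Hs) // (bigD1 i) //= leq_addr.
case bD: (b \in Delta); first by exists [:: b]; rewrite /simple_word /= bD mulmx1.
have [j [c' [Hc' lt]]] := refl_simple_height_lt bP (negbT bD) Hb.
have alD := mem_nth_simple j.
set al := Delta`_j in alD Hc' *.
have alnz : al != 0 by rewrite root_neq0 ?simple_root.
have [t' [t'D wt']] :=
  IH _ c' (refl_root (simple_root alD) bP) Hc' (leq_trans lt Hs).
exists (al :: rcons t' al); split.
  by rewrite /simple_word /= alD -/(simple_word (rcons t' al)) simple_word_rcons t'D alD.
have := refl_mx_conj (refl_mx al *m b) (isometry_refl_mx alnz).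
rewrite refl_mxK // /= word_mx_rcons wt' mulmxA => <-.
by rewrite -mulmxA refl_mx_sq ?mulmx1.
Qed.

Lemma refl_simple_word b : b \in Phi -> exists t, simple_word t /\ word_mx t = refl_mx b.
Proof.
move=> bP; case pb: (positive b); first exact: refl_positive_simple_word.
by rewrite -refl_mxN; apply: refl_positive_simple_word; rewrite ?oppr_root ?positiveN ?pb.
Qed.

Lemma inW_simple_word M : inW Phi M -> exists t, simple_word t /\ word_mx t = M.
Proof.
case=> s [+ ->]; elim: s => [|a s IH] /=; first by exists [::].
case/andP => aP /IH [t [tD wt]]; have [ta [taD wa]] := refl_simple_word aP.
exists (ta ++ t); split; first by rewrite /simple_word all_cat; apply/andP.
by rewrite word_mx_cat wa wt.
Qed.

Lemma lengthW_inW M : inW Phi M -> lengthW Delta M = inv_count M.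
Proof. by case/inW_simple_word => t [tD <-]; exact: lengthW_inv_count. Qed.

Section HighestRoot.
Variable ah : vec.
Hypothesis hr : highest_root Phi Delta ah.
Notation I := (Itilde Delta ah).

(* ah dominates s_al ah, and ah - s_al ah = refl_coef al ah *: al. *)
Lemma highest_root_dominant al : al \in Delta -> 0 <= dotv al ah.
Proof.
move=> aD; have aP := simple_root aD; have ha := dotv_gt0 (root_neq0 aP).
have [ahP /(_ _ (refl_root aP ahP)) [d Hd]] := hr.
change (ah - refl_mx al *m ah = comb (fun i => (d i)%:R)) in Hd.
have E : comb (fun i => (d i)%:R) =
         comb (fun i => refl_coef al ah * (i == simple_index aD)%:R).
  by rewrite -combZ comb_delta simple_indexE -Hd refl_mxE opprB addrC subrK.
have := comb_inj E (simple_index aD); rewrite eqxx mulr1 => Ec.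
have -> : dotv al ah = refl_coef al ah * dotv al al / 2.
  by rewrite /refl_coef; field; rewrite lt0r_neq0.
by rewrite -Ec divr_ge0 // mulr_ge0 // ltW.
Qed.

Lemma positive_dotv_ge0 b : positive b -> 0 <= dotv b ah.
Proof.
move=> /positiveP [c ->]; rewrite dotv_suml; apply: sumr_ge0 => i _.
by rewrite dotvZl mulr_ge0 ?ler0n ?highest_root_dominant ?mem_nth_simple.
Qed.

Lemma negative_dotv_le0 b : b \in Phi -> ~~ positive b -> dotv b ah <= 0.
Proof.
move=> bP nb; rewrite -oppr_ge0 -dotvNl positive_dotv_ge0 //.
by rewrite positiveN.
Qed.

Lemma dotv_gt0_positive b : b \in Phi -> 0 < dotv b ah -> positive b.
Proof. by move=> bP; apply: contraTT => /(negative_dotv_le0 bP); rewrite leNgt. Qed.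

Definition span_Itilde v := exists c : vec -> R, v = \sum_(a <- Delta | I a) c a *: a.

Lemma sum_Itilde_delta al : I al -> \sum_(a <- Delta | I a) (a == al)%:R *: a = al.
Proof.
move=> Ial; have [uD _ _ _] := bs.
rewrite -big_filter (bigD1_seq al) ?filter_uniq //; last by rewrite mem_filter Ial; case/andP: Ial.
rewrite eqxx scale1r big1; first exact: addr0.
by move=> i ni; rewrite (negbTE ni) scale0r.
Qed.

Lemma span_Itilde_refl al v : I al -> span_Itilde v -> span_Itilde (refl_mx al *m v).
Proof.
move=> Ial [c Hc]; exists (fun a => c a - refl_coef al v * (a == al)%:R).
rewrite refl_mxE.
under [RHS]eq_bigr => i _ do rewrite scalerBl -scalerA.
by rewrite sumrB -scaler_sumr sum_Itilde_delta // -Hc.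
Qed.

Lemma span_Itilde_word t v : all I t -> span_Itilde v -> span_Itilde (word_mx t *m v).
Proof.
elim: t => [|a t IH] /=; first by rewrite mul1mx.
by case/andP => Ia It Hv; rewrite -mulmxA; apply: span_Itilde_refl => //; apply: IH.
Qed.

Lemma span_Itilde_orth v : span_Itilde v -> dotv v ah = 0.
Proof.
move=> [c ->]; rewrite dotv_suml big1 // => a /andP [_ /eqP H].
by rewrite dotvZl dotvC H mulr0.
Qed.

Lemma Itilde_pos_roots al : I al -> pos_roots_Itilde Phi Delta ah al.
Proof.
move=> Ial; have alD : al \in Delta by case/andP: Ial.
split; first by split; [exact: simple_root alD | apply/positiveP/simple_positive].
by exists (fun a => (a == al)%:R); rewrite sum_Itilde_delta.
Qed.

Lemma reduced_fix_highest_root t : simple_word t -> reduced t ->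
  word_mx t *m ah = ah -> all I t.
Proof.
elim/last_ind: t => [|t al IH] // tD red H.
move: (tD); rewrite simple_word_rcons => /andP [tD' aD].
have aP := simple_root aD; have anz := root_neq0 aP.
have tW := inW_word (simple_word_roots tD').
have pl := reduced_last_positive tD red.
have uP : word_mx t *m al \in Phi by exact: inW_root tW aP.
have d0 : dotv al ah = 0.
  apply/eqP; rewrite eq_le highest_root_dominant // andbT.
  rewrite dotvC -(inW_isometry (inW_word (simple_word_roots tD))) H.
  rewrite word_mx_rcons -mulmxA refl_mx_self // mulmxN dotvC.
  by rewrite negative_dotv_le0 ?oppr_root // positiveN // pl.
rewrite all_rcons; apply/andP; split; first by rewrite /Itilde /= aD dotvC d0 eqxx.
apply: IH => //; first exact: reduced_rcons red.
by rewrite -{1}(refl_mx_orth d0) mulmxA -word_mx_rcons.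
Qed.

Lemma in_XI_unique x y : in_XI Phi Delta ah x -> in_XI Phi Delta ah y ->
  x *m ah = y *m ah -> x = y.
Proof.
move=> [[sx [sxP ->]] Xx] [[sy [syP ->]] Xy] H.
have uW : inW Phi (word_mx (rev sx ++ sy)) by apply: inW_word; rewrite all_cat all_rev sxP.
have xu : word_mx sx *m word_mx (rev sx ++ sy) = word_mx sy.
  by rewrite word_mx_cat mulmxA word_mx_Krev ?mul1mx // roots_neq0.
have [t [tD wt]] := inW_simple_word uW.
have [t' [t'D red wt']] := reduced_exists tD.
have u0ah : word_mx t' *m ah = ah.
  rewrite wt' wt word_mx_cat -mulmxA -H mulmxA word_mx_revK ?mul1mx //.
  exact: roots_neq0.
have It' := reduced_fix_highest_root t'D red u0ah.
case/lastP: t' t'D red wt' It' {u0ah} => [|t1 al] t'D red wt' It'.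
  by rewrite -xu -wt -wt' /= mulmx1.
exfalso; move: (t'D); rewrite simple_word_rcons => /andP [t1D aD].
move: It'; rewrite all_rcons => /andP [Ial It1].
have pl := reduced_last_positive t'D red.
have gP : word_mx t1 *m al \in Phi.
  exact: inW_root (inW_word (simple_word_roots t1D)) (simple_root aD).
have gI : pos_roots_Itilde Phi Delta ah (word_mx t1 *m al).
  split; first by split => //; apply/positiveP.
  by apply: span_Itilde_word => //; have [_] := Itilde_pos_roots Ial.
have [xgP /positiveP xg] := Xx _ gI.
have [ygP /positiveP yg] := Xy _ (Itilde_pos_roots Ial).
have : word_mx sy *m al = - (word_mx sx *m (word_mx t1 *m al)).
  rewrite -xu -wt -wt' word_mx_rcons -!mulmxA refl_mx_self ?root_neq0 ?simple_root //.
  by rewrite !mulmxN.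
by move=> E; move: yg; rewrite E positiveN // xg.
Qed.

Lemma refl_mulmx_in_XI x a : in_XI Phi Delta ah x -> x *m ah = a -> a \in Phi ->
  in_XI Phi Delta ah (refl_mx a *m x).
Proof.
move=> [[s [sP ->]] Xx] xah aP; split.
  by exists (a :: s); rewrite /= aP sP.
move=> g gI; have [_ gspan] := gI.
rewrite -mulmxA refl_mx_orth; first exact: Xx.
by rewrite dotvC -xah (inW_isometry (inW_word sP)) span_Itilde_orth.
Qed.

Lemma inv_count_refl_mulmx x a : inW Phi x -> x *m ah = a -> a \in Phi -> positive a ->
  inv_count (refl_mx a *m x) =
  (inv_count (refl_mx a) + inv_count x)%N.
Proof.
move=> xW xah aP pa.
have dotx b : dotv (x *m b) a = dotv b ah by rewrite -xah (inW_isometry xW).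
rewrite /inv_count (count_split _ (fun b => positive (x *m b))); congr addn.
  rewrite [RHS](count_roots_inW _ xW); apply: eq_in_count => b bP /=.
  rewrite -mulmxA; case pxb: (positive (x *m b)); rewrite ?andbF ?andbT //=.
  case nb: (positive (refl_mx a *m (x *m b))); rewrite ?andbF ?andbT //=.
  apply: (dotv_gt0_positive bP); rewrite -dotx.
  by apply: refl_negative_dotv_gt0 => //; [exact: inW_root xW bP | rewrite nb].
apply: eq_in_count => b bP /=.
rewrite -mulmxA; case pb: (positive b) => //=.
case pxb: (positive (x *m b)); rewrite /= ?andbF ?andbT //.
apply: contraT; rewrite negbK => H.
have xbP := inW_root xW bP.
have : 0 < dotv (- (x *m b)) a.
  apply: refl_negative_dotv_gt0 => //; rewrite ?oppr_root ?positiveN ?pxb //.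
  by rewrite mulmxN positiveN ?H // refl_root.
rewrite -mulmxN dotx => /(dotv_gt0_positive (oppr_root bP)).
by rewrite positiveN // pb.
Qed.

Lemma lengthW_refl_mulmx x a : inW Phi x -> x *m ah = a -> a \in Phi -> positive a ->
  lengthW Delta (refl_mx a *m x) = (lengthW Delta (refl_mx a) + lengthW Delta x)%N.
Proof.
move=> xW xah aP pa; have aW : inW Phi (refl_mx a) by exists [:: a]; rewrite /= aP mulmx1.
have axW : inW Phi (refl_mx a *m x).
  by case: xW => s [sP ->]; exists (a :: s); rewrite /= aP sP.
by rewrite !lengthW_inW // inv_count_refl_mulmx.
Qed.

End HighestRoot.

End RootSystem.

Theorem proposition1p7 (R : realFieldType) (n : nat)
    (Phi Delta : seq 'cV[R]_n) (ah : 'cV[R]_n) :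
  root_system Phi -> irreducible_rs Phi -> is_basis Phi Delta ->
  highest_root Phi Delta ah ->
  forall a : 'cV[R]_n, pos_root Phi Delta a -> long_root Phi a ->
  forall xm xp : 'M[R]_n,
    is_x Phi Delta ah (- a) xm -> is_x Phi Delta ah a xp ->
    [/\ xm = refl_mx a *m xp,
        lengthW Delta xm = lengthW Delta (refl_mx a *m xp) &
        lengthW Delta (refl_mx a *m xp) = (lengthW Delta (refl_mx a) + lengthW Delta xp)%N].
Proof.
move=> rs _ bs hr a [aP /positiveP pa] _ xm xp [Xm xmah] [Xp xpah].
have xmE : xm = refl_mx a *m xp.
  apply: (in_XI_unique rs bs hr) Xm (refl_mulmx_in_XI rs Xp xpah aP) _.
  by rewrite xmah -mulmxA xpah refl_mx_self ?(root_neq0 rs).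
split => //; first by rewrite xmE.
exact: (lengthW_refl_mulmx rs bs hr) Xp.1 xpah aP pa.
Qed.
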